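(* Let $q$ be a prime power and $n$ a positive integer. If there exists an element of $\mathbb{F}_{q^n}$ that is primitive and $2$-normal over $\mathbb{F}_q$, then $n\geq 4$, and if moreover $n=4$ then $q\equiv 1\pmod 4$.
   Context: An element of $\mathbb{F}_{q^n}$ is primitive if it generates $\mathbb{F}_{q^n}^*$. For $\alpha\in\mathbb{F}_{q^n}$ let $g_\alpha(x)=\sum_{i=0}^{n-1}\alpha^{q^i}x^{n-1-i}$; $\alpha$ is $k$-normal over $\mathbb{F}_q$ if $\gcd(x^n-1,g_\alpha(x))$ in $\mathbb{F}_{q^n}[x]$ has degree $k$. *)

From mathcomp Require Import all_boot all_order all_algebra all_field.
Set Implicit Arguments. Unset Strict Implicit. Unset Printing Implicit Defensive.
Import GRing.Theory.
Local Open Scope ring_scope.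

Definition prime_power (q : nat) : Prop :=
  exists p k : nat, prime p /\ (0 < k)%N /\ q = (p ^ k)%N.

Definition primitive_elt (L : finFieldType) (a : L) : Prop :=
  forall b : L, b != 0 -> exists k : nat, b = a ^+ k.

Definition g_poly (L : finFieldType) (q n : nat) (a : L) : {poly L} :=
  \sum_(i < n) (a ^+ (q ^ i)%N)%:P * 'X^(n.-1 - i).

Definition k_normal (L : finFieldType) (q n k : nat) (a : L) : Prop :=
  (size (gcdp ('X^n - 1) (g_poly q n a))).-1 = k.

(* If a is 2-normal, h := gcd(X^n - 1, g_a) has degree 2, while a, being primitive, has
   multiplicative order q^n - 1, so a^m = a^m' forces q^n - 1 <= m' - m for m < m'.
   For n = 1, h cannot divide X - 1; for n = 2, h ~ X^2 - 1 would divide g_a, of degree 1;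
   for n = 3, g_a ~ h divides X^3 - 1, which forces (a^q)^3 = a^3.
   For n = 4 it suffices to show h ~ X^2 - c with c^2 = 1 unless q = 1 mod 4, because
   X^2 - c | g_a means a^(q^2) = -c a. For q even, X^4 - 1 = (X - 1)^4. For q = 3 mod 4,
   F_(q^4) contains a square root i of -1, and X g_a = g_(a^q) + a (X^4 - 1) shows that the
   roots of g_a among the 4th roots of unity are stable under z |-> z^q, which swaps i and -i;
   hence h is either divisible by X^2 + 1 or coprime to it. *)

From mathcomp Require Import all_boot all_order all_algebra all_field.
From mathcomp Require Import ring zify.
Set Implicit Arguments. Unset Strict Implicit. Unset Printing Implicit Defensive.
Import GRing.Theory.
Local Open Scope ring_scope.

Section PrimitiveElement.

Variables (L : finFieldType) (a : L).
Hypothesis a_prim : primitive_elt a.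

Lemma primitive_elt_card_leq (m : nat) :
  (forall k, exists2 j, (j < m)%N & a ^+ k = a ^+ j) -> (#|L| <= m.+1)%N.
Proof.
move=> per.
have cover : {subset predC1 (0 : L) <= codom (fun j : 'I_m => a ^+ j)}.
  move=> b /= b_neq0; have [k ->] := a_prim b_neq0.
  by have [j lt_jm ->] := per k; apply/codomP; exists (Ordinal lt_jm).
have := leq_trans (subset_leq_card (introT subsetP cover)) (card_size _).
by rewrite cardC1 size_codom card_ord; case: #|L|.
Qed.

Lemma primitive_elt_neq0 : (3 < #|L|)%N -> a != 0.
Proof.
apply: contraTneq => a0; rewrite -leqNgt; apply: primitive_elt_card_leq => -[|k].
  by exists 0%N.
by exists 1%N; rewrite // a0 !expr0n.
Qed.

Lemma primitive_elt_expr_eq1 (m : nat) :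
  (0 < m)%N -> a ^+ m = 1 -> (#|L| <= m.+1)%N.
Proof.
move=> m_gt0 am1; apply: primitive_elt_card_leq => k.
exists (k %% m)%N; first by rewrite ltn_pmod.
by rewrite {1}(divn_eq k m) exprD mulnC exprM am1 expr1n mul1r.
Qed.

Lemma primitive_elt_expr_eq (m m' : nat) : (3 < #|L|)%N -> (m < m')%N ->
  a ^+ m = a ^+ m' -> (#|L| <= (m' - m).+1)%N.
Proof.
move=> L_gt3 lt_mm' eq_am; apply: primitive_elt_expr_eq1; first by rewrite subn_gt0.
apply: (mulIf (expf_neq0 m (primitive_elt_neq0 L_gt3))).
by rewrite -exprD subnK 1?ltnW // mul1r.
Qed.

Lemma primitive_elt_sqrtN1 :
  (4 %| #|L|.-1)%N -> (a ^+ (#|L|.-1 %/ 4)) ^+ 2 = -1.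
Proof.
have L_gt1 := card_finNzRing_gt1 L.
move=> /dvdnP[e cardL]; rewrite cardL mulnK //.
have {}cardL : #|L| = (e * 4).+1 by rewrite -cardL prednK // ltnW.
have e_gt0 : (0 < e)%N by move: L_gt1; rewrite cardL; lia.
have a_neq0 : a != 0 by apply: primitive_elt_neq0; rewrite cardL; lia.
have a4e : a ^+ (e * 4) = 1.
  by apply: (mulIf a_neq0); rewrite mul1r -exprSr -cardL expf_card.
have : (a ^+ e ^+ 2) ^+ 2 == 1 by rewrite -!exprM a4e.
rewrite sqrf_eq1 => /orP[/eqP a2e|/eqP //].
have /primitive_elt_expr_eq1 : (0 < e * 2)%N by rewrite muln_gt0 e_gt0.
by rewrite exprM a2e cardL => /(_ erefl); lia.
Qed.

End PrimitiveElement.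

Section GPoly.

Variables (L : finFieldType) (q : nat).
Implicit Types (a z : L) (n k : nat).

Lemma g_poly0 a : g_poly q 0 a = 0.
Proof. by rewrite /g_poly big_ord0. Qed.

Lemma g_polyS n a : g_poly q n.+1 a = a%:P * 'X^n + g_poly q n (a ^+ q).
Proof.
rewrite /g_poly big_ord_recl expn0 expr1 subn0; congr (_ + _).
by apply: eq_bigr => i _; rewrite -exprM -expnS /= subnS predn_sub.
Qed.

Lemma g_polySr n a : g_poly q n.+1 a = g_poly q n a * 'X + (a ^+ (q ^ n))%:P.
Proof.
rewrite /g_poly big_ord_recr /= subnn mulr1 mulr_suml; congr (_ + _).
by apply: eq_bigr => i _; rewrite -mulrA -exprSr -predn_sub prednK ?subn_gt0.
Qed.

Lemma size_g_poly_leq n a : (size (g_poly q n a) <= n)%N.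
Proof.
elim: n a => [|n IHn] a; first by rewrite g_poly0 size_poly0.
rewrite g_polyS (leq_trans (size_polyD _ _)) // geq_max (leqW (IHn _)) andbT.
by rewrite mul_polyC (leq_trans (size_scale_leq _ _)) // size_polyXn.
Qed.

Lemma size_g_poly n a : a != 0 -> size (g_poly q n a) = n.
Proof.
case: n => [|n] a_neq0; first by rewrite g_poly0 size_poly0.
by rewrite g_polyS size_polyDl size_Cmul ?size_polyXn // ltnS size_g_poly_leq.
Qed.

Lemma g_poly_mulX n a : a ^+ (q ^ n) = a ->
  g_poly q n a * 'X = g_poly q n (a ^+ q) + a%:P * ('X^n - 1).
Proof.
case: n => [|n] aqn; first by rewrite !g_poly0 expr0 subrr mulr0 mul0r addr0.
by rewrite g_polyS g_polySr -exprM -expnS aqn exprSr; ring.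
Qed.

Lemma horner_g_poly_expr n a z : [pchar L].-nat q ->
  (g_poly q n a).[z] ^+ q = (g_poly q n (a ^+ q)).[z ^+ q].
Proof.
move=> qnat; elim: n a => [|n IHn] a.
  by rewrite !g_poly0 !horner0 expr0n eqn0Ngt (andP qnat).1.
by rewrite !g_polyS !hornerE exprDn_pchar // IHn exprMn exprAC.
Qed.

Lemma root_g_poly_expr n a z : [pchar L].-nat q -> a ^+ (q ^ n) = a ->
  z ^+ n = 1 -> root (g_poly q n a) z -> root (g_poly q n a) (z ^+ q).
Proof.
case: n => [|n] qnat aqn zn1 /rootP gz0; first by rewrite g_poly0 root0.
have z_neq0 : z != 0 by apply: contra_eq_neq zn1 => ->; rewrite expr0n eq_sym oner_neq0.
have := congr1 (horner^~ (z ^+ q)) (g_poly_mulX aqn).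
rewrite hornerMX hornerD -horner_g_poly_expr // gz0 expr0n eqn0Ngt (andP qnat).1.
rewrite !hornerE exprAC zn1 expr1n subrr mulr0 => /eqP.
by rewrite mulf_eq0 expf_eq0 (negPf z_neq0) andbF orbF.
Qed.

Lemma g_poly3 a :
  g_poly q 3 a = a%:P * 'X^2 + (a ^+ q)%:P * 'X + (a ^+ (q ^ 2))%:P.
Proof. by rewrite /g_poly !big_ord_recr big_ord0 /= add0r expn0 expn1 expr1 mulr1. Qed.

Lemma g_poly4 a : g_poly q 4 a =
  a%:P * 'X^3 + (a ^+ q)%:P * 'X^2 + (a ^+ (q ^ 2))%:P * 'X + (a ^+ (q ^ 3))%:P.
Proof. by rewrite /g_poly !big_ord_recr big_ord0 /= add0r expn0 expn1 expr1 mulr1. Qed.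

Lemma k_normal_size n k a : (0 < k)%N -> k_normal q n k a ->
  size (gcdp ('X^n - 1) (g_poly q n a)) = k.+1.
Proof. by rewrite /k_normal; lia. Qed.

Lemma k_normal_leq n k a : (0 < n)%N -> k_normal q n k a -> (k <= n)%N.
Proof.
move=> n_gt0 <-; have := dvdp_leq _ (dvdp_gcdl ('X^n - 1) (g_poly q n a)).
by rewrite -size_poly_eq0 -polyC1 size_XnsubC // => /(_ isT); lia.
Qed.

Lemma n_normal_eq0 n a : (0 < n)%N -> k_normal q n n a -> a = 0.
Proof.
move=> n_gt0 /(k_normal_size n_gt0) sh; have [//|a_neq0] := eqVneq a 0.
have g_neq0 : g_poly q n a != 0 by rewrite -size_poly_gt0 size_g_poly.
by have := dvdp_leq g_neq0 (dvdp_gcdr ('X^n - 1) _); rewrite sh size_g_poly // ltnn.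
Qed.

Lemma k_normal_pred_dvdp n a : a != 0 -> (1 < n)%N -> k_normal q n n.-1 a ->
  g_poly q n a %| 'X^n - 1.
Proof.
move=> a_neq0 n_gt1 an.
have sh : size (gcdp ('X^n - 1) (g_poly q n a)) = n by rewrite (k_normal_size _ an); lia.
have : gcdp ('X^n - 1) (g_poly q n a) %= g_poly q n a.
  by rewrite -dvdp_size_eqp ?dvdp_gcdr // sh size_g_poly.
by move/eqp_dvdl <-; rewrite dvdp_gcdl.
Qed.

End GPoly.

Section SmallDivisors.

Variable F : fieldType.
Implicit Types (c i u v w t : F) (h : {poly F}).

Lemma size_MXaddC_leq u v : (size (u%:P * 'X + v%:P)%R <= 2)%N.
Proof. by rewrite size_MXaddC; case: ifP => // _; rewrite ltnS size_polyC leq_b1. Qed.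

Lemma dvdp_MXaddC_eq0 h u v :
  (2 < size h)%N -> h %| u%:P * 'X + v%:P -> u = 0 /\ v = 0.
Proof.
move=> h_gt2 h_dvd; have : u%:P * 'X + v%:P == 0.
  apply: contraTT h_gt2 => r_neq0; rewrite -leqNgt.
  exact: leq_trans (dvdp_leq r_neq0 h_dvd) (size_MXaddC_leq u v).
rewrite -size_poly_eq0 size_MXaddC polyC_eq0.
by case: ifP => // /andP[/eqP-> /eqP->].
Qed.

Lemma dvdp_X3sub1_quadratic u v w : u != 0 ->
  u%:P * 'X^2 + v%:P * 'X + w%:P %| 'X^3 - 1 -> v ^+ 3 = u ^+ 3.
Proof.
set d := _ + _ + _ => u_neq0 d_dvd.
have size_d : size d = 3.
  rewrite /d -addrA size_polyDl ?size_Cmul ?size_polyXn //.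
  exact: leq_ltn_trans (size_MXaddC_leq v w) _.
have : d %| (v ^+ 2 - u * w)%:P * 'X + (v * w - u ^+ 2)%:P.
  have -> : (v ^+ 2 - u * w)%:P * 'X + (v * w - u ^+ 2)%:P =
      (u ^+ 2)%:P * ('X^3 - 1) - (u%:P * 'X - v%:P) * d.
    by rewrite /d !(polyCB, polyCM, rmorphXn); ring.
  by rewrite dvdp_sub ?dvdp_mull ?dvdpp.
case/dvdp_MXaddC_eq0 => [|v2 vw]; first by rewrite size_d.
apply/eqP; rewrite -subr_eq0.
have -> : v ^+ 3 - u ^+ 3 = v * (v ^+ 2 - u * w) + u * (v * w - u ^+ 2) by ring.
by rewrite v2 vw !mulr0 addr0.
Qed.

Lemma dvdp_X2subC_cubic c u v w t :
  'X^2 - c%:P %| u%:P * 'X^3 + v%:P * 'X^2 + w%:P * 'X + t%:P -> w = - (c * u).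
Proof.
move=> dvd_cubic.
have : 'X^2 - c%:P %| (w + c * u)%:P * 'X + (t + c * v)%:P.
  have -> : (w + c * u)%:P * 'X + (t + c * v)%:P =
      u%:P * 'X^3 + v%:P * 'X^2 + w%:P * 'X + t%:P - (u%:P * 'X + v%:P) * ('X^2 - c%:P).
    by rewrite !(polyCD, polyCM); ring.
  by rewrite dvdp_sub ?dvdp_mull ?dvdpp.
by case/dvdp_MXaddC_eq0 => [|/eqP]; rewrite ?size_XnsubC // addr_eq0 => /eqP.
Qed.

Lemma dvdp_X4sub1_pchar2 h : 2 \in [pchar F] ->
  h %| 'X^4 - 1 -> size h = 3 -> h %= 'X^2 - 1.
Proof.
move=> char2 h_dvd sh.
have two0 : 2%:R = 0 :> {poly F} by rewrite -polyC_natr (pcharf0 char2).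
have sqr_pchar2 (p : {poly F}) : (p - 1) ^+ 2 = p ^+ 2 - 1.
  apply/eqP; rewrite -subr_eq0 (_ : _ - _ = 2%:R * (1 - p)); first by rewrite two0 mul0r.
  ring.
have X4sub1 : ('X - 1%:P) ^+ 4 = 'X^4 - 1 :> {poly F}.
  by rewrite polyC1 (_ : 4 = 2 * 2)%N // exprM !sqr_pchar2 -exprM.
move: h_dvd; rewrite -X4sub1 => /dvdp_exp_XsubCP[k _ hk].
move: sh; rewrite (eqp_size hk) size_exp_XsubC => -[k2].
by rewrite k2 polyC1 sqr_pchar2 in hk.
Qed.

Lemma dvdp_X4sub1_sqrtN1 h i : 2%:R != 0 :> F -> i ^+ 2 = -1 ->
  h %| 'X^4 - 1 -> size h = 3 -> root h i = root h (- i) ->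
  (h %= 'X^2 - 1) || (h %= 'X^2 + 1).
Proof.
move=> two_neq0 i2 h_dvd sh root_hiN.
have X2add1 : ('X - i%:P) * ('X - (- i)%:P) = 'X^2 + 1.
  by rewrite rmorphN opprK -subr_sqr -rmorphXn i2 rmorphN rmorph1 opprK.
have X4sub1 : ('X^2 - 1) * ('X^2 + 1) = 'X^4 - 1 :> {poly F} by ring.
have [hi | hNi] := boolP (root h i).
  have X2add1_dvd : 'X^2 + 1 %| h.
    rewrite -X2add1 Gauss_dvdp ?coprimep_XsubC2 ?dvdp_XsubCl -?root_hiN ?hi //.
    rewrite -opprD oppr_eq0 -mulr2n -mulr_natr mulf_neq0 //.
    by apply: contra_eq_neq i2 => ->; rewrite expr0n eq_sym oppr_eq0 oner_neq0.
  by apply/orP; right; rewrite eqp_sym -dvdp_size_eqp // sh -polyC1 size_XnaddC.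
have cop : coprimep h ('X^2 + 1) by rewrite -X2add1 coprimepMr !coprimep_XsubC -root_hiN hNi.
have h_dvd2 : h %| 'X^2 - 1 by rewrite -(Gauss_dvdpl _ cop) X4sub1.
by rewrite -dvdp_size_eqp // sh -polyC1 size_XnsubC.
Qed.

End SmallDivisors.

Section PrimitiveTwoNormal.

Variables (L : finFieldType) (p k q : nat) (a : L).
Hypotheses (p_pr : prime p) (charL : p \in [pchar L]) (k_gt0 : (0 < k)%N).
Hypotheses (qE : q = (p ^ k)%N) (a_prim : primitive_elt a).

Lemma q_gt1 : (1 < q)%N.
Proof. by rewrite qE -(expn0 p) ltn_exp2l ?prime_gt1. Qed.

Lemma pchar_nat_q : [pchar L].-nat q.
Proof. by rewrite qE (eq_pnat _ (pcharf_eq charL)) pnatX pnat_id. Qed.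

Lemma even_pchar2 : ~~ odd q -> 2 \in [pchar L].
Proof.
rewrite qE oddX eqn0Ngt k_gt0 /= -dvdn2 dvdn_prime2 // => /eqP p2.
by have := charL; rewrite -p2.
Qed.

Lemma odd_two_neq0 : odd q -> 2%:R != 0 :> L.
Proof.
rewrite -(dvdn_pcharf charL) dvdn_prime2 // qE; apply: contraTneq => ->.
by rewrite oddX eqn0Ngt k_gt0.
Qed.

Lemma primitive_two_normal_geq4 n : (0 < n)%N -> #|L| = (q ^ n)%N ->
  k_normal q n 2 a -> (4 <= n)%N.
Proof.
move=> n_gt0 cardL a2; rewrite leqNgt; apply/negP => n_lt4; have q_gt1 := q_gt1.
have [n1|[n2|n3]] : (n = 1 \/ n = 2 \/ n = 3)%N by lia.
- by move: a2; rewrite n1 => /(k_normal_leq (ltn0Sn 0)).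
- have a_neq0 : a != 0 by apply: (primitive_elt_neq0 a_prim); rewrite cardL n2; nia.
  by move: a2; rewrite n2 => /(n_normal_eq0 (ltn0Sn 1)) /eqP; rewrite (negPf a_neq0).
have a_neq0 : a != 0 by apply: (primitive_elt_neq0 a_prim); rewrite cardL n3; nia.
move: a2; rewrite n3 => /(k_normal_pred_dvdp (n := 3) a_neq0 isT); rewrite g_poly3.
move/(dvdp_X3sub1_quadratic a_neq0); rewrite -exprM mulnC => /esym a3.
by have := primitive_elt_expr_eq a_prim _ _ a3; rewrite cardL n3; nia.
Qed.

Lemma sqrtN1_expr_mod4 (z : L) : z ^+ 2 = -1 -> (q %% 4 = 3)%N -> z ^+ q = - z.
Proof.
move=> z2 q3; have z4 : z ^+ 4 = 1 by rewrite (exprM z 2 2) z2 sqrrN expr1n.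
by rewrite (divn_eq q 4) q3 exprD mulnC exprM z4 expr1n mul1r exprS z2 mulrN1.
Qed.

Section Degree4.

Hypothesis cardL : #|L| = (q ^ 4)%N.

Lemma gcd_g_poly4_Neqp c : c ^+ 2 = 1 ->
  ~~ (gcdp ('X^4 - 1) (g_poly q 4 a) %= 'X^2 - c%:P).
Proof.
move=> c2; apply/negP => /(eqp_dvdl (g_poly q 4 a)); rewrite dvdp_gcdr g_poly4.
move=> /esym/dvdp_X2subC_cubic aq2; have q_gt1 := q_gt1.
have L_gt3 : (3 < #|L|)%N by rewrite cardL; nia.
have /(primitive_elt_expr_eq a_prim L_gt3) : (2 < q ^ 2 * 2)%N by nia.
by rewrite exprM aq2 sqrrN exprMn c2 mul1r cardL => /(_ erefl); nia.
Qed.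

Lemma root_g_poly4_opp z : (q %% 4 = 3)%N -> z ^+ 2 = -1 ->
  root (g_poly q 4 a) z -> root (g_poly q 4 a) (- z).
Proof.
move=> q3 z2; rewrite -(sqrtN1_expr_mod4 z2 q3).
apply: root_g_poly_expr pchar_nat_q _ _; first by rewrite -cardL expf_card.
by rewrite (exprM z 2 2) z2 sqrrN expr1n.
Qed.

Lemma root_gcd_g_poly4_opp z : (q %% 4 = 3)%N -> z ^+ 2 = -1 ->
  root (gcdp ('X^4 - 1) (g_poly q 4 a)) z = root (gcdp ('X^4 - 1) (g_poly q 4 a)) (- z).
Proof.
move=> q3 z2; have Nz2 : (- z) ^+ 2 = -1 by rewrite sqrrN.
have X4sub1_root (y : L) : y ^+ 2 = -1 -> root ('X^4 - 1) y.
  by move=> y2; rewrite rootE !hornerE (exprM y 2 2) y2 sqrrN expr1n subrr.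
rewrite !root_gcd !X4sub1_root //=; apply/idP/idP; first exact: root_g_poly4_opp.
by move/(root_g_poly4_opp q3 Nz2); rewrite opprK.
Qed.

Lemma primitive_two_normal4_mod4 : k_normal q 4 2 a -> (q %% 4 = 1)%N.
Proof.
move=> a2; set h := gcdp ('X^4 - 1) (g_poly q 4 a).
have sh : size h = 3 := k_normal_size (ltn0Sn 1) a2.
have h_dvd : h %| 'X^4 - 1 := dvdp_gcdl _ _.
have [q_odd|q_even] := boolP (odd q); last first.
  have := dvdp_X4sub1_pchar2 (even_pchar2 q_even) h_dvd sh.
  by rewrite -polyC1 (negPf (gcd_g_poly4_Neqp (expr1n _ _))).
have [//|q3] : (q %% 4 = 1 \/ q %% 4 = 3)%N by lia.
have L_mod4 : (4 %| #|L|.-1)%N.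
  by rewrite cardL -subn1 -eqn_mod_dvd ?expn_gt0 ?(ltnW q_gt1) // -modnXm q3.
have i2 := primitive_elt_sqrtN1 a_prim L_mod4.
have := dvdp_X4sub1_sqrtN1 (odd_two_neq0 q_odd) i2 h_dvd sh (root_gcd_g_poly4_opp q3 i2).
have X2add1 : 'X^2 + 1 = 'X^2 - (-1)%:P :> {poly L} by rewrite rmorphN rmorph1 opprK.
have N1_2 : (-1) ^+ 2 = 1 :> L by rewrite sqrrN expr1n.
rewrite X2add1 -polyC1 (negPf (gcd_g_poly4_Neqp (expr1n _ _))).
by rewrite (negPf (gcd_g_poly4_Neqp N1_2)).
Qed.

End Degree4.

End PrimitiveTwoNormal.

Theorem lemma3p1 (q n : nat) (L : finFieldType) :
  prime_power q -> (0 < n)%N -> #|L| = (q ^ n)%N ->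
  (exists a : L, primitive_elt a /\ k_normal q n 2 a) ->
  (4 <= n)%N /\ (n = 4%N -> q %% 4 = 1)%N.
Proof.
move=> [p [k [p_pr [k_gt0 qE]]]] n_gt0 cardL [a [a_prim a2]].
have charL : p \in [pchar L].
  by apply: (card_finPcharP (n := k * n)) => //; rewrite cardL qE expnM.
split; first exact: (primitive_two_normal_geq4 p_pr charL k_gt0 qE a_prim n_gt0 cardL a2).
move=> n4; rewrite n4 in cardL a2.
exact: (primitive_two_normal4_mod4 p_pr charL k_gt0 qE a_prim cardL a2).
Qed.
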